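(* Consider the model below. A pair $(\mathbf A^\ddagger,\mathbf q^\ddagger)\in\mathcal A\times\mathbb R^n_{\ge0}$ maximizes aggregate profit $\Pi$ over $\mathcal A\times\mathbb R^n_{\ge 0}$ if and only if there is a pair $(\mathbf A^\dagger,\mathbf q^\dagger)$ maximizing total surplus $\Omega$ over $\mathcal A\times\mathbb R^n_{\ge0}$ with $\mathbf A^\ddagger=\mathbf A^\dagger$ and $\mathbf q^\ddagger=\mathbf q^\dagger/2$. Consequently, for such pairs, $\Omega(\mathbf A^\ddagger,\mathbf q^\ddagger)/\Omega(\mathbf A^\dagger,\mathbf q^\dagger)=3/4$.
   Context: Model: integers $n\ge2$ (firms) and $m\ge2$ (common characteristics); parameters $\alpha>0$, $\boldsymbol\beta\in\mathbb R^m$ with $\|\boldsymbol\beta\|_2=1$, and $\boldsymbol\gamma\in\mathbb R^n$ with $\gamma_i>0$ for all $i$. $\mathcal A$ is the set of real $m\times n$ matrices $\mathbf A=[\mathbf a_1,\dots,\mathbf a_n]$ with $\|\mathbf a_i\|_2=1$ for all $i$; an output profile is $\mathbf q\in\mathbb R^n_{\ge 0}$. With $\mathbf x=\mathbf A\mathbf q$, total surplus is $\Omega(\mathbf A,\mathbf q)=\alpha(\mathbf x^\top\boldsymbol\beta-\tfrac12\mathbf x^\top\mathbf x)+\mathbf q^\top\boldsymbol\gamma-\tfrac12\mathbf q^\top\mathbf q$ and aggregate profit is $\Pi(\mathbf A,\mathbf q)=\alpha(\mathbf x^\top\boldsymbol\beta-\mathbf x^\top\mathbf x)+\mathbf q^\top\boldsymbol\gamma-\mathbf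 q^\top\mathbf q$. *)

From HB Require Import structures.
From mathcomp Require Import all_boot all_order all_algebra.
From mathcomp Require Import reals.
Set Implicit Arguments. Unset Strict Implicit. Unset Printing Implicit Defensive.
Import Order.TTheory GRing.Theory Num.Theory.
Local Open Scope ring_scope.

Section Model.
Variables (R : realType) (m n : nat).

Definition sqnorm k (v : 'cV[R]_k) : R := \sum_(i < k) v i 0 ^+ 2.

Definition in_calA (A : 'M[R]_(m, n)) : Prop :=
  forall i : 'I_n, Num.sqrt (sqnorm (col i A)) = 1.

Definition nonneg_vec (q : 'cV[R]_n) : Prop := forall i : 'I_n, 0 <= q i 0.

Definition dotv k (u v : 'cV[R]_k) : R := (u^T *m v) 0 0.

Definition Omega (alpha : R) (beta : 'cV[R]_m) (gamma : 'cV[R]_n)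
  (A : 'M[R]_(m, n)) (q : 'cV[R]_n) : R :=
  let x := A *m q in
  alpha * (dotv x beta - 2^-1 * dotv x x) + dotv q gamma - 2^-1 * dotv q q.

Definition Pi (alpha : R) (beta : 'cV[R]_m) (gamma : 'cV[R]_n)
  (A : 'M[R]_(m, n)) (q : 'cV[R]_n) : R :=
  let x := A *m q in
  alpha * (dotv x beta - dotv x x) + dotv q gamma - dotv q q.

Definition is_maximizer (F : 'M[R]_(m, n) -> 'cV[R]_n -> R)
  (A : 'M[R]_(m, n)) (q : 'cV[R]_n) : Prop :=
  [/\ in_calA A, nonneg_vec q &
      forall A' q', in_calA A' -> nonneg_vec q' -> F A' q' <= F A q].

End Model.

(* Profit is surplus with the quadratic terms doubled, so [Pi A q = Omega A (2 q) / 2]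
   and the profit maximizers are exactly the surplus maximizers with halved output.
   Along a ray, [Omega A (t q) = t L - t^2 Q / 2]; at a surplus maximizer this
   concave function of [t >= 0] peaks at [t = 1], which forces [L = Q] because
   the maximal surplus is positive.  Then [Omega A q = Q / 2] and
   [Omega A (q / 2) = 3 Q / 8]. *)
From HB Require Import structures.
From mathcomp Require Import all_boot all_order all_algebra.
From mathcomp Require Import reals.
From mathcomp Require Import ring lra.
Import Order.TTheory GRing.Theory Num.Theory.
Local Open Scope ring_scope.

Section RayQuadratic.
Variable R : realFieldType.

Lemma ray_max_at_one (L Q : R) :
  (forall t, 0 <= t -> t * L - t ^+ 2 / 2 * Q <= L - Q / 2) ->
  0 < L - Q / 2 -> L = Q.
Proof.
move=> ray pos.
have Q_gt0 : 0 < Q by have := ray 2 (ler0n R 2); lra.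
have L_ge0 : 0 <= L by lra.
have := ray (L / Q) (divr_ge0 L_ge0 (ltW Q_gt0)).
have -> : L / Q * L - (L / Q) ^+ 2 / 2 * Q = L ^+ 2 / Q / 2.
  by field; rewrite gt_eqF.
rewrite ler_pdivrMr ?ltr0n // ler_pdivrMr // => ineq.
by apply/eqP; rewrite -subr_eq0 -sqrf_eq0 eq_le sqr_ge0 andbT; lra.
Qed.

Lemma ray_max_gt0 (L Q : R) :
  0 < L -> 0 < Q -> 0 < L / Q * L - (L / Q) ^+ 2 / 2 * Q.
Proof.
move=> L_gt0 Q_gt0.
have -> : L / Q * L - (L / Q) ^+ 2 / 2 * Q = L ^+ 2 / Q / 2.
  by field; rewrite gt_eqF.
by rewrite !divr_gt0 ?exprn_gt0.
Qed.

End RayQuadratic.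

Section DotProduct.
Variable R : realType.

Lemma dotvE k (u v : 'cV[R]_k) : dotv u v = \sum_i u i 0 * v i 0.
Proof. by rewrite /dotv mxE; apply: eq_bigr => i _; rewrite mxE. Qed.

Lemma dotvZl k t (u v : 'cV[R]_k) : dotv (t *: u) v = t * dotv u v.
Proof. by rewrite !dotvE mulr_sumr; apply: eq_bigr => i _; rewrite mxE mulrA. Qed.

Lemma dotvZr k t (u v : 'cV[R]_k) : dotv u (t *: v) = t * dotv u v.
Proof. by rewrite !dotvE mulr_sumr; apply: eq_bigr => i _; rewrite mxE mulrCA. Qed.

Lemma dotv_ge0 k (u : 'cV[R]_k) : 0 <= dotv u u.
Proof. by rewrite dotvE; apply: sumr_ge0 => i _; rewrite -expr2 sqr_ge0. Qed.

Lemma dotv_gt0 k (u : 'cV[R]_k) i : u i 0 != 0 -> 0 < dotv u u.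
Proof.
move=> ui_neq0; rewrite dotvE (bigD1 i) //= ltr_pwDl ?mulf_gt0 //.
  by rewrite -expr2 exprn_even_gt0.
by apply: sumr_ge0 => j _; rewrite -expr2 sqr_ge0.
Qed.

End DotProduct.

Lemma nonneg_vecZ {R : realType} {n} {c} {q : 'cV[R]_n} :
  0 <= c -> nonneg_vec q -> nonneg_vec (c *: q).
Proof. by move=> c_ge0 q_ge0 i; rewrite mxE mulr_ge0. Qed.

Section Model.
Variables (R : realType) (m n : nat).
Variables (alpha : R) (beta : 'cV[R]_m) (gamma : 'cV[R]_n).

Local Notation Omega := (Omega alpha beta gamma).
Local Notation Pi := (Pi alpha beta gamma).

Definition Omega_lin (A : 'M[R]_(m, n)) q := alpha * dotv (A *m q) beta + dotv q gamma.
Definition Omega_quad (A : 'M[R]_(m, n)) q :=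
  alpha * dotv (A *m q) (A *m q) + dotv q q.

Lemma Omega_ray A q t :
  Omega A (t *: q) = t * Omega_lin A q - t ^+ 2 / 2 * Omega_quad A q.
Proof. by rewrite /Omega -scalemxAr !dotvZl !dotvZr /Omega_lin /Omega_quad; ring. Qed.

Lemma Pi_Omega A q : Pi A q = 2^-1 * Omega A (2 *: q).
Proof. by rewrite /Pi /Omega -scalemxAr !dotvZl !dotvZr; field. Qed.

Lemma ler_Pi_Omega A A' q q' :
  (Pi A q <= Pi A' q') = (Omega A (2 *: q) <= Omega A' (2 *: q')).
Proof. by rewrite !Pi_Omega ler_pM2l ?invr_gt0 ?ltr0n. Qed.

Lemma is_maximizer_Pi_Omega A q :
  is_maximizer Pi A q <-> is_maximizer Omega A (2 *: q).
Proof.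
have half_ge0 : (0 : R) <= 2^-1 by rewrite invr_ge0 ler0n.
have two_neq0 : (2 : R) != 0 by rewrite pnatr_eq0.
have dblK := scalerKV two_neq0; have halfK := scalerK two_neq0.
split=> -[A_in q_ge0 maxA]; split=> //.
- exact: nonneg_vecZ.
- move=> A' q' A'_in q'_ge0.
  have := maxA A' (2^-1 *: q') A'_in (nonneg_vecZ half_ge0 q'_ge0).
  by rewrite ler_Pi_Omega [X in Omega A' X]dblK.
- by have := nonneg_vecZ half_ge0 q_ge0; rewrite [X in nonneg_vec X]halfK.
- move=> A' q' A'_in q'_ge0; rewrite ler_Pi_Omega.
  exact: maxA (nonneg_vecZ (ler0n R 2) q'_ge0).
Qed.

Hypotheses (alpha_gt0 : 0 < alpha) (beta_unit : Num.sqrt (sqnorm beta) = 1).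
Hypotheses (gamma_gt0 : forall i, 0 < gamma i 0) (n_gt0 : (0 < n)%N).

Lemma exists_Omega_gt0 :
  exists A q, [/\ in_calA A, nonneg_vec q & 0 < Omega A q].
Proof.
pose A : 'M[R]_(m, n) := \matrix_(i, j) beta i 0.
have A_in : in_calA A.
  move=> j; rewrite -beta_unit /sqnorm; congr Num.sqrt.
  by apply: eq_bigr => i _; rewrite !mxE.
have A_gamma : A *m gamma = (\sum_j gamma j 0) *: beta.
  apply/matrixP => i k; rewrite ord1 !mxE mulr_suml.
  by apply: eq_bigr => j _; rewrite mxE mulrC.
have gg_gt0 : 0 < dotv gamma gamma.
  by apply: (@dotv_gt0 _ _ _ (Ordinal n_gt0)); rewrite gt_eqF.
have lin_gt0 : 0 < Omega_lin A gamma.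
  rewrite /Omega_lin A_gamma dotvZl ltr_pwDr //.
  apply/mulr_ge0/mulr_ge0; [exact: ltW | | exact: dotv_ge0].
  by apply: sumr_ge0 => j _; exact: ltW.
have quad_gt0 : 0 < Omega_quad A gamma.
  by rewrite /Omega_quad ltr_pwDr //; apply: mulr_ge0; [exact: ltW | exact: dotv_ge0].
set t := Omega_lin A gamma / Omega_quad A gamma.
exists A, (t *: gamma); split=> //.
  apply: nonneg_vecZ => [|i]; last exact: ltW.
  exact: divr_ge0 (ltW lin_gt0) (ltW quad_gt0).
by rewrite Omega_ray ray_max_gt0.
Qed.

Lemma Omega_max_gt0 {A q} : is_maximizer Omega A q -> 0 < Omega A q.
Proof.
case=> _ _ maxA; have [A' [q' [A'_in q'_ge0 pos]]] := exists_Omega_gt0.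
exact: lt_le_trans pos (maxA _ _ A'_in q'_ge0).
Qed.

Lemma Omega_max_lin_quad A q :
  is_maximizer Omega A q -> Omega_lin A q = Omega_quad A q.
Proof.
move=> maxA; have [A_in q_ge0 maxA_le] := maxA.
have Omega1 : Omega A q = Omega_lin A q - Omega_quad A q / 2.
  by rewrite -{1}(scale1r q) Omega_ray; ring.
apply: ray_max_at_one => [t t_ge0|]; rewrite -Omega1; last exact: Omega_max_gt0 maxA.
by rewrite -Omega_ray; apply: maxA_le => //; exact: nonneg_vecZ.
Qed.

Lemma Omega_half_max_ratio A q :
  is_maximizer Omega A q -> Omega A (2^-1 *: q) / Omega A q = 3 / 4.
Proof.
move=> maxA; have := Omega_max_gt0 maxA.
rewrite -{1 3}(scale1r q) !Omega_ray Omega_max_lin_quad // => Q_pos.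
by field; rewrite gt_eqF //; lra.
Qed.

End Model.

Theorem proposition1 (R : realType) (m n : nat) (hn : (2 <= n)%N) (hm : (2 <= m)%N)
  (alpha : R) (beta : 'cV[R]_m) (gamma : 'cV[R]_n)
  (halpha : 0 < alpha) (hbeta : Num.sqrt (sqnorm beta) = 1)
  (hgamma : forall i : 'I_n, 0 < gamma i 0) :
  (forall (Add : 'M[R]_(m, n)) (qdd : 'cV[R]_n),
     in_calA Add -> nonneg_vec qdd ->
     (is_maximizer (Pi alpha beta gamma) Add qdd <->
      exists (Ad : 'M[R]_(m, n)) (qd : 'cV[R]_n),
        [/\ is_maximizer (Omega alpha beta gamma) Ad qd,
            Add = Ad & qdd = 2^-1 *: qd])) /\
  (forall (Add Ad : 'M[R]_(m, n)) (qdd qd : 'cV[R]_n),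
     is_maximizer (Pi alpha beta gamma) Add qdd ->
     is_maximizer (Omega alpha beta gamma) Ad qd ->
     Add = Ad -> qdd = 2^-1 *: qd ->
     Omega alpha beta gamma Add qdd / Omega alpha beta gamma Ad qd = 3 / 4).
Proof.
have two_neq0 : (2 : R) != 0 by rewrite pnatr_eq0.
have n_gt0 : (0 < n)%N by apply: leq_trans hn.
split=> [Add qdd _ _ | Add Ad qdd qd _ maxO -> ->].
  rewrite is_maximizer_Pi_Omega; split=> [maxO | [Ad [qd [maxO -> ->]]]].
    by exists Add, (2 *: qdd); rewrite scalerK.
  by rewrite scalerKV.
exact: Omega_half_max_ratio.
Qed.
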